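(* For every integer $n\ge 1$, let \[ R_n:=\frac{\pi}{4}-\sum_{m=0}^{n-1}\frac{(-1)^m}{2m+1}=\sum_{m=n}^{\infty}\frac{(-1)^m}{2m+1}. \] Then \begin{align*} R_{n}=\frac{(-1)^{n}(2n-1)!}{16}\sum_{k=0}^{\infty}\frac{1}{16^{k}}\Bigg[&\frac{8}{(8k+1)_{2n}}-\frac{4}{(8k+3)_{2n}}-\frac{4}{(8k+4)_{2n}} \\ &-\frac{2}{(8k+5)_{2n}}+\frac{1}{(8k+7)_{2n}}+\frac{1}{(8k+8)_{2n}}\Bigg]. \end{align*}
   Context: For a real number $a$ and integer $m\ge 0$, $(a)_m$ denotes the rising factorial (Pochhammer symbol): $(a)_0:=1$ and $(a)_m:=a(a+1)\cdots(a+m-1)=\Gamma(a+m)/\Gamma(a)$. Thus $(8k+q)_{2n}$ is a product of $2n$ consecutive factors starting at $8k+q$. *)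

From Stdlib Require Import Reals.
From Coquelicot Require Import Coquelicot.
Open Scope R_scope.

Fixpoint poch (a : R) (m : nat) : R :=
  match m with
  | O => 1
  | S m' => poch a m' * (a + INR m')
  end.

Definition Rtail (n : nat) : R :=
  PI / 4 - sum_f_R0 (fun m => (-1) ^ m / (2 * INR m + 1)) (n - 1).

Definition term (n k : nat) : R :=
  / 16 ^ k *
  ( 8 / poch (8 * INR k + 1) (2 * n)
  - 4 / poch (8 * INR k + 3) (2 * n)
  - 4 / poch (8 * INR k + 4) (2 * n)
  - 2 / poch (8 * INR k + 5) (2 * n)
  + 1 / poch (8 * INR k + 7) (2 * n)
  + 1 / poch (8 * INR k + 8) (2 * n)).

(** Write [beta m a = m!/(a)_(m+1)], the Euler integral B(a, m+1); its
    difference in [a] raises [m]: [beta m a - beta m (a+1) = beta (m+1) a].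
    So [(2n-1)! * term n k] is the bracket of the theorem applied to
    [beta (2n-1)] at the points [8k+1+j], and passing from [n] to [n+1]
    replaces [beta (2n-1)] by its second difference.  The bracket [K]
    satisfies [K b + K (Δ²b) = 16 Δb(0) - Δb(8)] for every sequence [b], and
    the shift by 8 is one step in [k]; so the [n]-th and [(n+1)]-th summands
    add up to a telescoping series in [k], with sum
    [16 * beta (2n) 1 = 16/(2n+1)].  Hence the right-hand side obeys the
    recurrence [R_n - R_(n+1) = (-1)^n/(2n+1)] of [R_n]; both tend to 0, so
    they agree. *)
From Stdlib Require Import Reals Factorial Lra Lia FunctionalExtensionality.
From Coquelicot Require Import Coquelicot.
Open Scope R_scope.

Lemma poch_succ_l (a : R) (m : nat) : poch a (S m) = a * poch (a + 1) m.
Proof.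
  induction m as [|m IH]; [simpl; ring|].
  change (poch a (S (S m))) with (poch a (S m) * (a + INR (S m))).
  rewrite IH, S_INR; simpl; ring.
Qed.

Lemma poch_gt0 (a : R) (m : nat) : 0 < a -> 0 < poch a m.
Proof.
  intros Ha; induction m as [|m IH]; simpl; [lra|].
  pose proof (pos_INR m); apply Rmult_lt_0_compat; lra.
Qed.

Lemma poch_ge_fact (a : R) (m : nat) : 1 <= a -> INR (fact m) <= poch a m.
Proof.
  intros Ha; induction m as [|m IH]; simpl poch; [simpl; lra|].
  rewrite fact_simpl, mult_INR, S_INR, Rmult_comm.
  pose proof (pos_INR m); pose proof (INR_fact_lt_0 m).
  apply Rmult_le_compat; lra.
Qed.

Lemma poch_1 (m : nat) : poch 1 m = INR (fact m).
Proof.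
  induction m as [|m IH]; [reflexivity|].
  simpl poch; rewrite IH, fact_simpl, mult_INR, S_INR; ring.
Qed.

Definition beta (m : nat) (a : R) : R := INR (fact m) / poch a (S m).

Lemma beta_sub_succ (m : nat) (a : R) :
  0 < a -> beta m a - beta m (a + 1) = beta (S m) a.
Proof.
  intros Ha; unfold beta.
  pose proof (poch_gt0 (a + 1) m ltac:(lra)).
  pose proof (pos_INR m).
  rewrite !(poch_succ_l a).
  change (poch (a + 1) (S m)) with (poch (a + 1) m * (a + 1 + INR m)).
  rewrite fact_simpl, mult_INR, S_INR.
  field; repeat split; lra.
Qed.

Lemma beta_1 (m : nat) : beta m 1 = / INR (S m).
Proof.
  unfold beta; rewrite poch_1, fact_simpl, mult_INR.
  field; split; [apply not_0_INR; lia | apply INR_fact_neq_0].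
Qed.

Lemma beta_bounds (m : nat) (a : R) : 1 <= a -> 0 < beta m a <= / INR (S m).
Proof.
  intros Ha; rewrite <- beta_1; unfold beta.
  pose proof (INR_fact_lt_0 m).
  pose proof (poch_gt0 a (S m) ltac:(lra)).
  pose proof (poch_ge_fact a (S m) Ha) as Hge; rewrite <- poch_1 in Hge.
  split; [apply Rdiv_lt_0_compat; lra|].
  pose proof (poch_gt0 1 (S m) Rlt_0_1).
  apply Rmult_le_compat_l; [lra|].
  apply Rinv_le_contravar; lra.
Qed.

Definition delta (b : nat -> R) (j : nat) : R := b j - b (S j).

(* The bracket of the theorem, read on [b j = f (8k + 1 + j)]. *)
Definition kernel (b : nat -> R) : R :=
  8 * b 0%nat - 4 * b 2%nat - 4 * b 3%nat - 2 * b 4%nat + b 6%nat + b 7%nat.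

Lemma kernel_add_delta2 (b : nat -> R) :
  kernel b + kernel (delta (delta b)) = 16 * delta b 0 - delta b 8.
Proof. unfold kernel, delta; ring. Qed.

Lemma kernel_abs_le (b : nat -> R) (M : R) :
  (forall j, 0 <= b j <= M) -> Rabs (kernel b) <= 10 * M.
Proof.
  intros Hb; unfold kernel.
  pose proof (Hb 0%nat); pose proof (Hb 2%nat); pose proof (Hb 3%nat).
  pose proof (Hb 4%nat); pose proof (Hb 6%nat); pose proof (Hb 7%nat).
  apply Rabs_le; lra.
Qed.

Lemma delta_beta (m : nat) (x : R) :
  0 < x -> delta (fun j => beta m (x + INR j)) = (fun j => beta (S m) (x + INR j)).
Proof.
  intros Hx; apply functional_extensionality; intros j; unfold delta.
  pose proof (pos_INR j).
  rewrite S_INR, <- Rplus_assoc; apply beta_sub_succ; lra.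
Qed.

Lemma term_kernel (n k : nat) :
  term n k = / 16 ^ k * kernel (fun j => / poch (8 * INR k + 1 + INR j) (2 * n)).
Proof.
  unfold term, kernel, Rdiv; rewrite !Rmult_1_l, !Rplus_assoc.
  (* what remains are the offsets, e.g. [3 = 1 + INR 2] *)
  repeat f_equal; simpl; ring.
Qed.

Lemma fact_mul_term (n k : nat) : (1 <= n)%nat ->
  INR (fact (2 * n - 1)) * term n k
  = / 16 ^ k * kernel (fun j => beta (2 * n - 1) (8 * INR k + 1 + INR j)).
Proof.
  intros Hn; rewrite term_kernel; unfold kernel, beta.
  replace (S (2 * n - 1)) with (2 * n)%nat by lia.
  unfold Rdiv; ring.
Qed.

Definition telescoped (n k : nat) : R := / 16 ^ k * beta (2 * n) (8 * INR k + 1).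

Lemma fact_mul_term_add_succ (n k : nat) : (1 <= n)%nat ->
  INR (fact (2 * n - 1)) * term n k + INR (fact (2 * S n - 1)) * term (S n) k
  = 16 * (telescoped n k - telescoped n (S k)).
Proof.
  intros Hn.
  rewrite !fact_mul_term by lia.
  replace (2 * S n - 1)%nat with (S (S (2 * n - 1))) by lia.
  assert (Hx : 0 < 8 * INR k + 1) by (pose proof (pos_INR k); lra).
  rewrite <- (delta_beta (S _) _ Hx), <- (delta_beta _ _ Hx).
  rewrite <- Rmult_plus_distr_l, kernel_add_delta2, delta_beta by exact Hx.
  unfold telescoped; cbv beta.
  replace (S (2 * n - 1)) with (2 * n)%nat by lia.
  replace (8 * INR k + 1 + INR 0) with (8 * INR k + 1) by (simpl; ring).
  replace (8 * INR k + 1 + INR 8) with (8 * INR (S k) + 1) by (rewrite S_INR; simpl; ring).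
  assert (0 < 16 ^ k) by (apply pow_lt; lra).
  simpl pow; field; lra.
Qed.

Lemma inv_poch_bounds (a : R) (m : nat) :
  1 <= a -> 0 < / poch a m <= / INR (fact m).
Proof.
  intros Ha; pose proof (poch_gt0 a m ltac:(lra)); split.
  - now apply Rinv_0_lt_compat.
  - apply Rinv_le_contravar; [apply INR_fact_lt_0 | now apply poch_ge_fact].
Qed.

Lemma term_abs_le (n k : nat) :
  Rabs (term n k) <= 10 / INR (fact (2 * n)) * (/ 16) ^ k.
Proof.
  rewrite term_kernel, Rabs_mult, pow_inv, Rabs_right, Rmult_comm
    by (apply Rle_ge, Rlt_le, Rinv_0_lt_compat, pow_lt; lra).
  apply Rmult_le_compat_r; [apply Rlt_le, Rinv_0_lt_compat, pow_lt; lra|].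
  apply kernel_abs_le; intros j.
  pose proof (pos_INR k); pose proof (pos_INR j).
  pose proof (inv_poch_bounds (8 * INR k + 1 + INR j) (2 * n) ltac:(lra)); lra.
Qed.

Section GeometricDomination.

Variables (a : nat -> R) (M q : R).
Hypothesis (Hq : 0 <= q < 1).
Hypothesis (Ha : forall k, Rabs (a k) <= M * q ^ k).

Lemma is_series_scal_geom : is_series (fun k => M * q ^ k) (M / (1 - q)).
Proof.
  apply (is_series_scal_l M (fun k => q ^ k)), is_series_geom.
  rewrite Rabs_right; lra.
Qed.

Lemma ex_series_Rabs_geom_dominated : ex_series (fun k => Rabs (a k)).
Proof.
  apply (@ex_series_le R_AbsRing R_CompleteNormedModule _ (fun k => M * q ^ k)).
  - intros k; unfold norm; simpl; unfold abs; simpl.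
    rewrite Rabs_Rabsolu; apply Ha.
  - eexists; exact is_series_scal_geom.
Qed.

Lemma ex_series_geom_dominated : ex_series a.
Proof. apply ex_series_Rabs, ex_series_Rabs_geom_dominated. Qed.

Lemma Series_geom_dominated_abs_le : Rabs (Series a) <= M / (1 - q).
Proof.
  eapply Rle_trans; [apply Series_Rabs, ex_series_Rabs_geom_dominated|].
  rewrite <- (is_series_unique _ _ is_series_scal_geom).
  apply Series_le; [intros k; split; [apply Rabs_pos | apply Ha]|].
  eexists; exact is_series_scal_geom.
Qed.

End GeometricDomination.

Lemma ex_series_term (n : nat) : ex_series (term n).
Proof. exact (ex_series_geom_dominated _ _ (/ 16) ltac:(lra) (term_abs_le n)). Qed.

Lemma is_series_telescoping (u : nat -> R) (l : R) :
  is_lim_seq u l -> is_series (fun k => u k - u (S k)) (u 0%nat - l).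
Proof.
  intros Hu.
  assert (Hpartial : forall N, sum_n (fun k => u k - u (S k)) N = u 0%nat - u (S N)).
  { intros N; rewrite sum_n_Reals; induction N as [|N IH]; simpl; [|rewrite IH]; ring. }
  change (is_lim_seq (sum_n (fun k => u k - u (S k))) (u 0%nat - l)).
  apply (is_lim_seq_ext _ _ _ (fun N => eq_sym (Hpartial N))).
  apply is_lim_seq_minus'; [apply is_lim_seq_const | now apply is_lim_seq_incr_1 in Hu].
Qed.

Lemma telescoped_lim (n : nat) : is_lim_seq (telescoped n) 0.
Proof.
  apply (is_lim_seq_le_le (fun _ => 0) _ (fun k => (/ 16) ^ k)).
  - intros k; unfold telescoped; rewrite <- pow_inv.
    pose proof (pos_INR k).
    pose proof (beta_bounds (2 * n) (8 * INR k + 1) ltac:(lra)) as [Hpos Hle].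
    assert (/ INR (S (2 * n)) <= 1).
    { rewrite <- Rinv_1; apply Rinv_le_contravar; [lra|].
      rewrite S_INR; pose proof (pos_INR (2 * n)); lra. }
    pose proof (pow_lt (/ 16) k ltac:(lra)); split; nra.
  - apply is_lim_seq_const.
  - apply is_lim_seq_geom; rewrite Rabs_right; lra.
Qed.

Lemma fact_mul_Series_add_succ (n : nat) : (1 <= n)%nat ->
  INR (fact (2 * n - 1)) * Series (term n)
  + INR (fact (2 * S n - 1)) * Series (term (S n)) = 16 / (2 * INR n + 1).
Proof.
  intros Hn.
  assert (Hsum : is_series
      (fun k => INR (fact (2 * n - 1)) * term n k + INR (fact (2 * S n - 1)) * term (S n) k)
      (INR (fact (2 * n - 1)) * Series (term n)
       + INR (fact (2 * S n - 1)) * Series (term (S n)))).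
  { apply (is_series_plus (V := R_NormedModule));
      apply (is_series_scal_l (V := R_NormedModule)), Series_correct, ex_series_term. }
  assert (Htel : is_series
      (fun k => INR (fact (2 * n - 1)) * term n k + INR (fact (2 * S n - 1)) * term (S n) k)
      (16 * (telescoped n 0 - 0))).
  { apply (is_series_ext (fun k => 16 * (telescoped n k - telescoped n (S k)))).
    - intros k; symmetry; now apply fact_mul_term_add_succ.
    - apply (is_series_scal_l (V := R_NormedModule)), is_series_telescoping, telescoped_lim. }
  rewrite <- (is_series_unique _ _ Hsum), (is_series_unique _ _ Htel).
  unfold telescoped; simpl (INR 0); rewrite Rmult_0_r, Rplus_0_l, beta_1, S_INR, mult_INR.
  simpl; field; pose proof (pos_INR n); lra.
Qed.

Definition rhs (n : nat) : R :=
  (-1) ^ n * INR (fact (2 * n - 1)) / 16 * Series (term n).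

Lemma rhs_sub_succ (n : nat) : (1 <= n)%nat ->
  rhs n - rhs (S n) = (-1) ^ n / (2 * INR n + 1).
Proof.
  intros Hn.
  assert (E : rhs n - rhs (S n) = (-1) ^ n / 16 *
    (INR (fact (2 * n - 1)) * Series (term n)
     + INR (fact (2 * S n - 1)) * Series (term (S n)))) by (unfold rhs; simpl pow; field).
  rewrite E, fact_mul_Series_add_succ by exact Hn.
  pose proof (pos_INR n); field; lra.
Qed.

Lemma Rtail_sub_succ (n : nat) : (1 <= n)%nat ->
  Rtail n - Rtail (S n) = (-1) ^ n / (2 * INR n + 1).
Proof.
  intros Hn; unfold Rtail; destruct n as [|p]; [lia|].
  replace (S (S p) - 1)%nat with (S p) by lia.
  replace (S p - 1)%nat with p by lia.
  change (sum_f_R0 ?f (S p)) with (sum_f_R0 f p + f (S p)); cbv beta; ring.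
Qed.

Lemma rhs_abs_le (n : nat) : (1 <= n)%nat -> Rabs (rhs n) <= / INR n.
Proof.
  intros Hn.
  pose proof (Series_geom_dominated_abs_le _ _ (/ 16) ltac:(lra) (term_abs_le n)) as HS.
  assert (Hfact : INR (fact (2 * n)) = INR (2 * n) * INR (fact (2 * n - 1))).
  { replace (2 * n)%nat with (S (2 * n - 1)) at 1 by lia.
    rewrite fact_simpl, mult_INR; do 2 f_equal; lia. }
  rewrite Hfact, mult_INR in HS.
  pose proof (INR_fact_lt_0 (2 * n - 1)); pose proof (lt_0_INR n ltac:(lia)).
  assert (Habs : Rabs (rhs n) = INR (fact (2 * n - 1)) / 16 * Rabs (Series (term n))).
  { unfold rhs; rewrite Rabs_mult, Rabs_div, Rabs_mult, pow_1_abs, !Rabs_right by lra.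
    now rewrite Rmult_1_l. }
  rewrite Habs.
  apply (Rle_trans _ (INR (fact (2 * n - 1)) / 16
    * (10 / (INR 2 * INR n * INR (fact (2 * n - 1))) / (1 - / 16)))).
  - apply Rmult_le_compat_l; [|exact HS].
    apply Rmult_le_pos; lra.
  - simpl (INR 2); apply Rle_trans with (/ (3 * INR n)); [right; field; lra|].
    apply Rinv_le_contravar; lra.
Qed.

Lemma rhs_lim : is_lim_seq rhs 0.
Proof.
  apply is_lim_seq_abs_0.
  apply (is_lim_seq_le_le_loc (fun _ => 0) _ (fun n => / INR n)).
  - exists 1%nat; intros n Hn; split; [apply Rabs_pos | now apply rhs_abs_le].
  - apply is_lim_seq_const.
  - exact (is_lim_seq_inv _ _ is_lim_seq_INR ltac:(discriminate)).
Qed.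

Lemma Rtail_lim : is_lim_seq Rtail 0.
Proof.
  apply is_lim_seq_incr_1.
  pose proof (proj2_sig exist_PI) as Hpi; rewrite <- is_lim_seq_Reals in Hpi.
  assert (Hl : PI / 4 = proj1_sig exist_PI).
  { rewrite <- Alt_PI_eq; unfold Alt_PI; destruct exist_PI; simpl; field. }
  replace (Finite 0) with (Finite (PI / 4 - proj1_sig exist_PI)) by (f_equal; lra).
  apply (is_lim_seq_ext (fun N => PI / 4 - sum_f_R0 (tg_alt PI_tg) N)).
  - intros N; unfold Rtail; replace (S N - 1)%nat with N by lia.
    f_equal; apply sum_eq; intros i _.
    unfold tg_alt, PI_tg; rewrite plus_INR, mult_INR; simpl (INR 2); simpl (INR 1).
    unfold Rdiv; f_equal; f_equal; ring.
  - apply is_lim_seq_minus'; [apply is_lim_seq_const | exact Hpi].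
Qed.

Lemma is_lim_seq_shift_invariant (u : nat -> R) (l : R) :
  (forall n, u (S n) = u n) -> is_lim_seq u l -> forall n, u n = l.
Proof.
  intros Hinv Hu n.
  assert (Hconst : forall p, u p = u 0%nat)
    by (intros p; induction p as [|p IH]; [reflexivity | now rewrite Hinv]).
  apply (is_lim_seq_ext _ (fun _ => u 0%nat)) in Hu; [|exact Hconst].
  rewrite Hconst.
  apply is_lim_seq_unique in Hu; rewrite Lim_seq_const in Hu; now injection Hu.
Qed.

Theorem theorem1 (n : nat) (hn : (1 <= n)%nat) :
  exists s : R,
    is_series (term n) s /\
    Rtail n = (-1) ^ n * INR (Factorial.fact (2 * n - 1)) / 16 * s.
Proof.
  exists (Series (term n)); split; [apply Series_correct, ex_series_term|].
  destruct n as [|p]; [lia|].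
  assert (Hdiff : is_lim_seq (fun p => Rtail (S p) - rhs (S p)) 0).
  { replace (Finite 0) with (Finite (0 - 0)) by (f_equal; ring).
    apply is_lim_seq_minus'.
    - apply (is_lim_seq_incr_1 Rtail), Rtail_lim.
    - apply (is_lim_seq_incr_1 rhs), rhs_lim. }
  assert (Hinv : forall p, Rtail (S (S p)) - rhs (S (S p)) = Rtail (S p) - rhs (S p)).
  { intros q; assert (Hq : (1 <= S q)%nat) by lia.
    pose proof (Rtail_sub_succ _ Hq); pose proof (rhs_sub_succ _ Hq); lra. }
  pose proof (is_lim_seq_shift_invariant _ _ Hinv Hdiff p) as Hp.
  unfold rhs in Hp; lra.
Qed.
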